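(* Suppose (EDR) holds with $\beta>1$, $\mathcal H$ has embedding index $\alpha_0$ with $\frac1\beta\le\alpha_0<1$, and $f_\rho^*\in[\mathcal H]^s$ with $\|f_\rho^*\|_{[\mathcal H]^s}\le R$ for some $0<s\le\alpha_0$. Let $f_\nu=\varphi_\nu(T)S_k^*f_\rho^*$. Then for any $\nu>0$ and any $\alpha_0<\alpha\le1$, $$\|f_\nu\|_{L^\infty}\le M_\alpha E R\,\nu^{\frac{\alpha-s}{2}}.$$
   Context: $\mathcal X\subseteq\mathbb R^d$ compact, $\rho$ a distribution on $\mathcal X\times\mathcal Y$ with marginal $\mu$, $f_\rho^*(x)=\int y\,d\rho(y|x)$, $L^p=L^p(\mathcal X,\mu)$. $\mathcal H$ separable RKHS with continuous kernel $k$, $\sup_xk(x,x)\le\kappa^2$; $S_k:\mathcal H\to L^2$ inclusion, $L_k=S_kS_k^*=\sum_i\lambda_i\langle\cdot,e_i\rangle_{L^2}e_i$ ($\lambda_i$ positive non-increasing, $\{e_i\}$ ONB of $\overline{\operatorname{ran}S_k}$, $\{\lambda_i^{1/2}e_i\}$ ONB of $\mathcal H$), $T=S_k^*S_k$. $[\mathcal H]^s=\{\sum_ia_i\lambda_i^{s/2}e_i:(a_i)\in\ell^2\}$, $\|\sum a_i\lambda_i^{s/2}e_i\|_{[\mathcal H]^s}=\|(a_i)\|_{\ell^2}$. $M_\alpha$ is the smallest $A\ge0$ with $\sum_i\lambda_i^\alpha e_i(x)^2\le A^2$ $\mu$-a.e. ($=\infty$ if none), equal to the norm of $[\mathcal H]^\alpha\hookrightarrow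 L^\infty$. (EDR): $ci^{-\beta}\le\lambda_i\le Ci^{-\beta}$. Embedding index: $\alpha_0=\inf\{\alpha\in[\frac1\beta,1]:M_\alpha<\infty\}$. Filter function: $\varphi_\nu:[0,\kappa^2]\to\mathbb R^+$ with $\sup_zz^\alpha\varphi_\nu(z)\le E\nu^{1-\alpha}$ for all $\alpha\in[0,1]$ and, for some $\tau\ge1$, $\sup_z|1-z\varphi_\nu(z)|z^\alpha\le F_\tau\nu^{-\alpha}$ for $\alpha\in[0,\tau]$. *)

From HB Require Import structures.
From mathcomp Require Import all_boot all_order all_algebra.
From mathcomp Require Import all_classical all_reals all_analysis ess_sup_inf.
Set Implicit Arguments. Unset Strict Implicit. Unset Printing Implicit Defensive.
Import Order.TTheory GRing.Theory Num.Theory.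
Import numFieldNormedType.Exports.
Local Open Scope classical_set_scope.
Local Open Scope ring_scope.

(* Spectral data of the integral operator L_k on L^2(X, mu):
   lam : nat -> R (lam i = lambda_{i+1}), e : nat -> X -> R (e i = e_{i+1}).
   Elements of H are represented by their coordinates b (in l^2) in the
   ONB {lam_i^{1/2} e_i} of H. *)

Definition Sk {X : Type} {R : realType} (lam : nat -> R) (e : nat -> X -> R)
  (b : nat -> R) : X -> R :=
  fun x => limn (fun n => \sum_(0 <= i < n) b i * Num.sqrt (lam i) * e i x).

(* S_k^* : L^2 -> H, in coordinates:
   <S_k^* f, lam_i^{1/2} e_i>_H = <f, lam_i^{1/2} e_i>_{L^2} *)
Definition Sk_adj {d} {X : measurableType d} {R : realType}
  (mu : {measure set X -> \bar R}) (lam : nat -> R) (e : nat -> X -> R)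
  (f : X -> R) : nat -> R :=
  fun i => Num.sqrt (lam i) * Rintegral mu setT (fun x => f x * e i x).

(* Functional calculus: T = S_k^* S_k acts diagonally on the ONB
   {lam_i^{1/2} e_i} of H with eigenvalues lam_i, so phi(T) multiplies the
   i-th coordinate by phi(lam_i). *)
Definition fun_calc {R : realType} (lam : nat -> R) (phi : R -> R)
  (b : nat -> R) : nat -> R :=
  fun i => phi (lam i) * b i.

Definition f_nu {d} {X : measurableType d} {R : realType}
  (mu : {measure set X -> \bar R}) (lam : nat -> R) (e : nat -> X -> R)
  (phi : R -> R -> R) (nu : R) (f : X -> R) : X -> R :=
  Sk lam e (fun_calc lam (phi nu) (Sk_adj mu lam e f)).

Definition Linf_norm {d} {X : measurableType d} {R : realType}
  (mu : {measure set X -> \bar R}) (f : X -> R) : \bar R :=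
  ess_sup mu (fun x => (`|f x|)%:E).

(* M_alpha: smallest A >= 0 with sum_i lam_i^alpha e_i(x)^2 <= A^2 mu-a.e.
   (+oo if there is none) *)
Definition M_emb {d} {X : measurableType d} {R : realType}
  (mu : {measure set X -> \bar R}) (lam : nat -> R) (e : nat -> X -> R)
  (alpha : R) : \bar R :=
  ereal_inf [set (A%:E) | A in [set A : R | 0 <= A /\
     (\forall x \ae mu,
        (\sum_(0 <= i <oo) ((lam i `^ alpha) * e i x ^+ 2)%:E <= (A ^+ 2)%:E)%E)]].

Definition emb_index {d} {X : measurableType d} {R : realType}
  (mu : {measure set X -> \bar R}) (lam : nat -> R) (e : nat -> X -> R)
  (beta : R) : R :=
  inf [set alpha : R | beta^-1 <= alpha <= 1 /\ (M_emb mu lam e alpha < +oo)%E].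

Definition in_Hs_ball {d} {X : measurableType d} {R : realType}
  (mu : {measure set X -> \bar R}) (lam : nat -> R) (e : nat -> X -> R)
  (s Rad : R) (f : X -> R) : Prop :=
  measurable_fun setT f /\
  exists a : nat -> R,
    (\sum_(0 <= i <oo) ((a i) ^+ 2)%:E <= (Rad ^+ 2)%:E)%E /\
    ((fun n => (\int[mu]_x
        ((f x - \sum_(0 <= i < n) a i * lam i `^ (s / 2) * e i x) ^+ 2)%:E)%E)
       @ \oo --> 0%E).

From HB Require Import structures.
From mathcomp Require Import all_boot all_order all_algebra.
From mathcomp Require Import all_classical all_reals all_analysis ess_sup_inf measurable_realfun.
From mathcomp Require Import ring lra.
Import Order.TTheory GRing.Theory Num.Theory.
Import numFieldNormedType.Exports.
Local Open Scope classical_set_scope.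
Local Open Scope ring_scope.

(* Write f_rho = sum_i a_i lam_i^(s/2) e_i with sum_i a_i^2 <= R^2.  By orthonormality
   a_i lam_i^(s/2) is the Fourier coefficient <f_rho, e_i>, so in the eigenbasis
   f_nu = sum_i a_i phi_nu(lam_i) lam_i^(1 + s/2) e_i.  Since lam_i <= kappa^2 (Mercer),
   the filter bound with exponent 1 - (alpha - s)/2 gives
   phi_nu(lam) lam^(1 + s/2) <= E nu^((alpha - s)/2) lam^(alpha/2), and Cauchy-Schwarz yields
   |f_nu(x)| <= E R nu^((alpha - s)/2) (sum_i lam_i^alpha e_i(x)^2)^(1/2),
   which is at most M_alpha E R nu^((alpha - s)/2) for almost every x. *)

Local Notation integrableR mu f := (mu.-integrable setT (EFin \o f)).

Section CauchySchwarz.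
Context {R : realFieldType}.
Implicit Types x y t a b : R.

Lemma amgm_normrM x y t : 0 < t -> `|x * y| <= (t * x ^+ 2 + t^-1 * y ^+ 2) / 2.
Proof.
move=> t0; rewrite normrM -(real_normK (num_real x)) -(real_normK (num_real y)).
have sq : 0 <= t^-1 * (t * `|x| - `|y|) ^+ 2 by rewrite mulr_ge0 ?sqr_ge0 ?invr_ge0 ?ltW.
have expand : t^-1 * (t * `|x| - `|y|) ^+ 2 =
    t * `|x| ^+ 2 - 2 * (`|x| * `|y|) + t^-1 * `|y| ^+ 2.
  by field; rewrite gt_eqF.
rewrite expand in sq; lra.
Qed.

Lemma sqr_le_of_amgm x a b : 0 <= x -> 0 <= a -> 0 <= b ->
  (forall t, 0 < t -> x <= (t * a + t^-1 * b) / 2) -> x ^+ 2 <= a * b.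
Proof.
(* Take t = x / a, or t = (b + 1) / x to refute x > 0 when a = 0. *)
move=> x0 a0 b0 amgm; have [->|x_neq0] := eqVneq x 0; first by rewrite expr0n mulr_ge0.
have x_gt0 : 0 < x by rewrite lt_neqAle eq_sym x_neq0.
have [a_eq0|a_neq0] := eqVneq a 0.
  have /amgm : 0 < (b + 1) / x by rewrite divr_gt0 ?ltr_wpDl.
  rewrite a_eq0 mulr0 add0r invf_div.
  have y_gt0 : 0 < x / (b + 1) by rewrite divr_gt0 ?ltr_wpDl.
  have : x / (b + 1) * (b + 1) = x by rewrite divfK // gt_eqF ?ltr_wpDl.
  move: (x / (b + 1)) y_gt0 => y y_gt0 xE h; nra.
have a_gt0 : 0 < a by rewrite lt_neqAle eq_sym a_neq0.
have /amgm : 0 < x / a by rewrite divr_gt0.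
rewrite mulfVK // invf_div => h.
have : x <= a * b / x by rewrite mulrAC; lra.
by rewrite ler_pdivlMr // -expr2 mulrC.
Qed.

Lemma CauchySchwarz_sum (I : Type) (r : seq I) (P : pred I) (u v : I -> R) :
  (\sum_(i <- r | P i) `|u i * v i|) ^+ 2 <=
    (\sum_(i <- r | P i) u i ^+ 2) * \sum_(i <- r | P i) v i ^+ 2.
Proof.
apply: sqr_le_of_amgm; [exact: sumr_ge0|exact: sumr_ge0 (fun i _ => sqr_ge0 _)|
  exact: sumr_ge0 (fun i _ => sqr_ge0 _)|move=> t t0].
apply: le_trans; first by apply: ler_sum => i _; exact: amgm_normrM t0.
by rewrite -mulr_suml big_split /= -!mulr_sumr.
Qed.

End CauchySchwarz.

Section L2.
Context {d} {T : measurableType d} {R : realType} {mu : {measure set T -> \bar R}}.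

Lemma integrableRZl r {f : T -> R} : integrableR mu f -> integrableR mu (fun x => r * f x).
Proof. by move=> i; apply: (eq_integrable measurableT _ _ _ (integrableZl measurableT r i)). Qed.

Lemma integrableR_lin a b {f1 f2 : T -> R} : integrableR mu f1 -> integrableR mu f2 ->
  integrableR mu (fun x => a * f1 x + b * f2 x).
Proof.
move=> i1 i2; apply: (eq_integrable measurableT _ _ _ (integrableD measurableT
  (integrableRZl a i1) (integrableRZl b i2))) => x _ //.
Qed.

Lemma RintegralR_lin a b {f1 f2 : T -> R} : integrableR mu f1 -> integrableR mu f2 ->
  \int[mu]_x (a * f1 x + b * f2 x) = a * \int[mu]_x f1 x + b * \int[mu]_x f2 x.
Proof.
by move=> i1 i2; rewrite RintegralD ?RintegralZl ?integrableRZl.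
Qed.

Lemma integrableR_sqr (g : T -> R) : measurable_fun setT g ->
  (\int[mu]_x (g x ^+ 2)%:E < +oo)%E -> integrableR mu (fun x => g x ^+ 2).
Proof.
move=> mg g_lty; apply/integrableP; split.
  by apply/measurable_EFinP; exact: measurable_funM.
by under eq_integral => x _ do rewrite /comp abse_EFin ger0_norm ?sqr_ge0 //.
Qed.

Context {g h : T -> R}.
Hypotheses (mg : measurable_fun setT g) (mh : measurable_fun setT h).
Hypotheses (ig : integrableR mu (fun x => g x ^+ 2)) (ih : integrableR mu (fun x => h x ^+ 2)).

Lemma integrableR_mul_of_sqr : integrableR mu (fun x => g x * h x).
Proof.
have := integrableR_lin 1 1 ig ih.
apply: le_integrable measurableT _ _ _ _ => [|x _].
  by apply/measurable_EFinP; exact: measurable_funM.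
rewrite /comp !abse_EFin lee_fin !mul1r [X in _ <= X]ger0_norm ?addr_ge0 ?sqr_ge0 //.
have := amgm_normrM (g x) (h x) 1 ltr01; rewrite invr1 !mul1r.
have := sqr_ge0 (g x); have := sqr_ge0 (h x); lra.
Qed.

Lemma CauchySchwarz_Rintegral :
  (\int[mu]_x (g x * h x)) ^+ 2 <= (\int[mu]_x g x ^+ 2) * \int[mu]_x h x ^+ 2.
Proof.
rewrite -real_normK ?num_real //; apply: sqr_le_of_amgm => [||| t t0].
- exact: normr_ge0.
- by apply: Rintegral_ge0 => x _; exact: sqr_ge0.
- by apply: Rintegral_ge0 => x _; exact: sqr_ge0.
apply: le_trans (le_normr_Rintegral measurableT integrableR_mul_of_sqr) _.
have -> : forall A B, (t * A + t^-1 * B) / 2 = t / 2 * A + t^-1 / 2 * B.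
  by move=> A B; ring.
rewrite -RintegralR_lin //; apply: le_Rintegral => //.
- exact: (integrable_norm integrableR_mul_of_sqr).
- exact: integrableR_lin.
move=> x _; have := amgm_normrM (g x) (h x) t t0; lra.
Qed.

End L2.

Section OrthonormalSystem.
Context {d} {T : measurableType d} {R : realType} {mu : {measure set T -> \bar R}}.
Context {e : nat -> T -> R}.
Hypothesis e_meas : forall i, measurable_fun setT (e i).
Hypothesis e_orth : forall i j,
  (\int[mu]_x (e i x * e j x)%:E = (if i == j then 1 else 0)%:E)%E.

Lemma Rintegral_e_mul i j : \int[mu]_x (e i x * e j x) = (i == j)%:R.
Proof. by rewrite /Rintegral e_orth; case: (i == j). Qed.

Lemma integrableR_sqr_e i : integrableR mu (fun x => e i x ^+ 2).
Proof.
apply: integrableR_sqr => //.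
by under eq_integral => x _ do rewrite expr2; rewrite e_orth eqxx ltry.
Qed.

Lemma integrableR_e_mul i j : integrableR mu (fun x => e i x * e j x).
Proof.
exact: integrableR_mul_of_sqr (e_meas i) (e_meas j) (integrableR_sqr_e i) (integrableR_sqr_e j).
Qed.

Lemma integrableR_sum_e_mul (c : nat -> R) n i :
  integrableR mu (fun x => (\sum_(0 <= j < n) c j * e j x) * e i x).
Proof.
elim: n => [|n IH].
  apply: (eq_integrable measurableT (cst 0%E)); last exact: integrable0.
  by move=> x _; rewrite /= big_geq // mul0r.
apply: (eq_integrable measurableT _ _ _ (integrableR_lin 1 (c n) IH (integrableR_e_mul n i))).
by move=> x _; rewrite /= big_nat_recr //= mulrDl mul1r mulrA.
Qed.

Lemma Rintegral_sum_e_mul (c : nat -> R) n i :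
  \int[mu]_x ((\sum_(0 <= j < n) c j * e j x) * e i x) = if (i < n)%N then c i else 0.
Proof.
elim: n => [|n IH].
  under eq_Rintegral => x _ do rewrite big_geq // mul0r.
  by rewrite Rintegral_cst // mul0r.
under eq_Rintegral => x _ do rewrite big_nat_recr //= mulrDl -[X in X + _]mul1r -mulrA.
rewrite RintegralR_lin ?integrableR_sum_e_mul ?integrableR_e_mul // IH Rintegral_e_mul mul1r.
case: ltngtP => [lt_in|lt_ni|->].
- by rewrite ltnS ltnW // mulr0 addr0.
- by rewrite ltnS leqNgt lt_ni mulr0 addr0.
- by rewrite ltnSn mulr1 add0r.
Qed.

Lemma Rintegral_mul_e_of_L2_cvg (f : T -> R) (c : nat -> R) : measurable_fun setT f ->
  (fun n => \int[mu]_x ((f x - \sum_(0 <= j < n) c j * e j x) ^+ 2)%:E)%E @ \oo --> 0%E ->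
  forall i, \int[mu]_x (f x * e i x) = c i.
Proof.
(* For n > i the defect is the coefficient of [f - S_n] on [e i], whose square
   is at most the squared L^2 error of the partial sum [S_n]. *)
move=> mf cv i; have /fine_cvgP[fin_err _] := cv.
suff : (((\int[mu]_x (f x * e i x) - c i) ^+ 2)%:E <= 0)%E.
  by rewrite lee_fin => sqr_le0; apply/eqP; rewrite -subr_eq0 -sqrf_eq0 eq_le sqr_le0 sqr_ge0.
apply: (cvge_to_ge cv).
near=> n.
have fin_g : (\int[mu]_x ((f x - \sum_(0 <= j < n) c j * e j x) ^+ 2)%:E \is a fin_num)%E.
  by near: n.
have lt_in : (i < n)%N by near: n; exact: nbhs_infty_gt.
pose g x := f x - \sum_(0 <= j < n) c j * e j x.
have mg : measurable_fun setT g.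
  apply: measurable_funB => //; apply: measurable_sum => j.
  exact: measurable_funM (measurable_cst _) (e_meas j).
have ig : integrableR mu (fun x => g x ^+ 2).
  apply: integrableR_sqr => //.
  by rewrite -ge0_fin_numE // integral_ge0 // => x _; rewrite lee_fin sqr_ge0.
have -> : \int[mu]_x (f x * e i x) = \int[mu]_x (g x * e i x) + c i.
  have := Rintegral_sum_e_mul c n i; rewrite lt_in => <-; rewrite -RintegralD //.
  - by apply: eq_Rintegral => x _; rewrite /g mulrBl subrK.
  - exact: integrableR_mul_of_sqr mg (e_meas i) ig (integrableR_sqr_e i).
  - exact: integrableR_sum_e_mul.
rewrite addrK -(fineK fin_g) lee_fin.
apply: le_trans (CauchySchwarz_Rintegral mg (e_meas i) ig (integrableR_sqr_e i)) _.
under [X in _ * X]eq_Rintegral => x _ do rewrite expr2.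
by rewrite Rintegral_e_mul eqxx mulr1.
Unshelve. all: by end_near.
Qed.

End OrthonormalSystem.

Section Series.
Context {R : realType}.

Lemma term_le_lim_series (u : nat -> R) l : (forall n, 0 <= u n) ->
  (fun n => \sum_(0 <= j < n) u j) @ \oo --> l -> forall i, u i <= l.
Proof.
move=> u_ge0 cv i; apply: (cvgr_to_ge cv).
near=> n; have i_lt : (i < n)%N by near: n; exact: nbhs_infty_gt.
rewrite (bigD1_seq i) ?mem_index_iota ?iota_uniq //= lerDl.
by apply: sumr_ge0 => j _; exact: u_ge0.
Unshelve. all: by end_near.
Qed.

Lemma abs_lim_series_le (u : nat -> R) B :
  (forall n, \sum_(0 <= i < n) `|u i| <= B) ->
  `|limn (fun n => \sum_(0 <= i < n) u i)| <= B.
Proof.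
move=> sum_le; have cvn : cvgn [normed series u].
  apply: nondecreasing_is_cvgn.
    exact: (nondecreasing_series (fun n _ _ => normr_ge0 (u n))).
  by exists B => _ [n _ <-]; exact: sum_le.
apply: le_trans (lim_series_norm cvn) _.
by apply: limr_le => //; exact: nearW.
Qed.

Lemma abs_lim_series_mul_le (a b : nat -> R) C :
  (forall n, (\sum_(0 <= i < n) a i ^+ 2) * \sum_(0 <= i < n) b i ^+ 2 <= C ^+ 2) ->
  `|limn (fun n => \sum_(0 <= i < n) a i * b i)| <= `|C|.
Proof.
move=> sum_le; apply: abs_lim_series_le => n.
rewrite -ler_sqr ?nnegrE ?sumr_ge0 // ?real_normK ?num_real //.
by apply: le_trans (sum_le n); exact: CauchySchwarz_sum.
Qed.

End Series.

Lemma le_of_normalized_bound {d} {T : measurableType d} {R : realType}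
    (mu : probability T R) (h : T -> R) (a B : R) :
  measurable_fun setT h -> (\int[mu]_x (h x * h x)%:E = 1)%E ->
  (forall x, a * h x ^+ 2 <= B) -> a <= B.
Proof.
move=> mh h_norm1 le_B.
have ih : integrableR mu (fun x => h x ^+ 2).
  by apply: integrableR_sqr => //; under eq_integral do rewrite expr2; rewrite h_norm1 ltry.
have -> : a = \int[mu]_x (a * h x ^+ 2).
  rewrite RintegralZl //; under eq_Rintegral do rewrite expr2.
  by rewrite /Rintegral h_norm1 mulr1.
apply: le_trans (_ : _ <= \int[mu]_x (cst B x)) _.
  apply: le_Rintegral => //; first exact: integrableRZl.
  exact: finite_measure_integrable_cst.
rewrite Rintegral_cst //; set muT := (X in fine X).
by rewrite (_ : muT = 1%E) ?mulr1 //; exact: probability_setT.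
Qed.

Section Mercer.
Context {d} {T : measurableType d} {R : realType} {mu : probability T R}.
Context {k : T -> T -> R} {kappa : R} {lam : nat -> R} {e : nat -> T -> R}.
Hypothesis lam_ge0 : forall i, 0 <= lam i.
Hypothesis e_meas : forall i, measurable_fun setT (e i).
Hypothesis e_norm1 : forall i, (\int[mu]_x (e i x * e i x)%:E = 1)%E.
Hypothesis mercer_diag :
  forall x, (fun n => \sum_(0 <= i < n) lam i * e i x * e i x) @ \oo --> k x x.
Hypothesis k_diag_le : forall x, k x x <= kappa ^+ 2.

Lemma mercer_eigenvalue_le i : lam i <= kappa ^+ 2.
Proof.
apply: (le_of_normalized_bound mu (e i) _ _ (e_meas i) (e_norm1 i)) => x.
apply: le_trans (k_diag_le x); rewrite expr2 mulrA.
apply: (term_le_lim_series _ _ _ (mercer_diag x)) => j.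
by rewrite -mulrA mulr_ge0 // -expr2 sqr_ge0.
Qed.

End Mercer.

Section FilterFunction.
Context {R : realType}.
Context {phi : R -> R -> R} {E kappa : R}.
Hypothesis phi_ge0 : forall nu z : R, 0 < nu -> 0 <= z <= kappa ^+ 2 -> 0 <= phi nu z.
Hypothesis phi_qual : forall nu a z : R, 0 < nu -> 0 <= a <= 1 -> 0 <= z <= kappa ^+ 2 ->
  z `^ a * phi nu z <= E * nu `^ (1 - a).

Lemma filter_const_ge0 (nu : R) : 0 < nu -> 0 <= E.
Proof.
move=> nu_gt0; have z_rng : (0 : R) <= 0 <= kappa ^+ 2 by rewrite lexx sqr_ge0.
have := phi_qual nu 0 0 nu_gt0 (_ : 0 <= 0 <= 1) z_rng.
rewrite lexx ler01 powRr0 mul1r subr0 powRr1 ?(ltW nu_gt0) // => /(_ isT) phi_le.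
by have := le_trans (phi_ge0 nu 0 nu_gt0 z_rng) phi_le; rewrite pmulr_lge0.
Qed.

Lemma filter_source_le (nu alpha s z : R) : 0 < nu -> 0 < z <= kappa ^+ 2 ->
  0 <= s <= alpha -> alpha <= 1 ->
  phi nu z * z * z `^ (s / 2) <= E * nu `^ ((alpha - s) / 2) * z `^ (alpha / 2).
Proof.
move=> nu_gt0 /andP[z_gt0 z_le] /andP[s_ge0 s_le] alpha_le1.
pose b := 1 + s / 2 - alpha / 2.
have b_rng : 0 <= b <= 1 by apply/andP; split; rewrite /b; lra.
have := phi_qual nu b z nu_gt0 b_rng.
rewrite ltW // z_le => /(_ isT); rewrite (_ : 1 - b = (alpha - s) / 2); last by rewrite /b; ring.
have z_neq0 : z != 0 by rewrite gt_eqF.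
have split_pow : z * z `^ (s / 2) = z `^ b * z `^ (alpha / 2).
  rewrite -{1}(powRr1 (ltW z_gt0)) -!powRD ?z_neq0 ?implybT //.
  by congr (_ `^ _); rewrite /b; ring.
rewrite -mulrA split_pow mulrA (mulrC (phi nu z)) => le_E.
by rewrite ler_wpM2r // powR_ge0.
Qed.

End FilterFunction.

Lemma sum_le_of_nneseries_le {R : realType} (u : nat -> R) B : (forall i, 0 <= u i) ->
  (\sum_(0 <= i <oo) (u i)%:E <= B%:E)%E -> forall n, \sum_(0 <= i < n) u i <= B.
Proof.
move=> u_ge0 le_B n; rewrite -lee_fin -sumEFin; apply: le_trans le_B.
by apply: nneseries_lim_ge => i _ _; rewrite lee_fin.
Qed.

Lemma le_M_emb_mul {d} {X : measurableType d} {R : realType} (mu : {measure set X -> \bar R})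
    (lam : nat -> R) (e : nat -> X -> R) (alpha c : R) (y : \bar R) : 0 < c ->
  (forall A, 0 <= A ->
    (\forall x \ae mu, \sum_(0 <= i <oo) ((lam i `^ alpha) * e i x ^+ 2)%:E <= (A ^+ 2)%:E)%E ->
    (y <= (c * A)%:E)%E) ->
  (y <= M_emb mu lam e alpha * c%:E)%E.
Proof.
move=> c_gt0 le_cA; rewrite -lee_pdivrMr //; apply: le_ereal_inf_tmp => _ [A [A_ge0 SA] <-].
by rewrite lee_pdivrMr // -EFinM mulrC; exact: le_cA.
Qed.

Section SourceBound.
Context {d} {X : measurableType d} {R : realType} {mu : {measure set X -> \bar R}}.
Context {lam : nat -> R} {e : nat -> X -> R} {phi : R -> R -> R}.
Context {E kappa nu alpha s Rad : R} {f : X -> R} {a : nat -> R}.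
Hypothesis lam_gt0 : forall i, 0 < lam i.
Hypothesis lam_le : forall i, lam i <= kappa ^+ 2.
Hypothesis phi_ge0 : forall nu z : R, 0 < nu -> 0 <= z <= kappa ^+ 2 -> 0 <= phi nu z.
Hypothesis phi_qual : forall nu a z : R, 0 < nu -> 0 <= a <= 1 -> 0 <= z <= kappa ^+ 2 ->
  z `^ a * phi nu z <= E * nu `^ (1 - a).
Hypotheses (nu_gt0 : 0 < nu) (s_ge0 : 0 <= s) (s_le : s <= alpha) (alpha_le1 : alpha <= 1).
Hypothesis Rad_ge0 : 0 <= Rad.
Hypothesis a_l2 : (\sum_(0 <= i <oo) ((a i) ^+ 2)%:E <= (Rad ^+ 2)%:E)%E.
Hypothesis coef : forall i, \int[mu]_x (f x * e i x) = a i * lam i `^ (s / 2).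

Let K := E * nu `^ ((alpha - s) / 2).
Let weight i := phi nu (lam i) * lam i * lam i `^ (s / 2).

Lemma f_nu_expansion x : f_nu mu lam e phi nu f x =
  limn (fun n => \sum_(0 <= i < n) a i * (weight i * e i x)).
Proof.
rewrite /f_nu /Sk /fun_calc /Sk_adj; congr (limn _); apply/funext => n.
apply: eq_bigr => i _; rewrite coef /weight.
by rewrite -[X in _ = _ * (_ * X * _ * _)](sqr_sqrtr (ltW (lam_gt0 i))); ring.
Qed.

Lemma sqr_weight_le i : weight i ^+ 2 <= K ^+ 2 * lam i `^ alpha.
Proof.
have lam_rng : 0 < lam i <= kappa ^+ 2 by rewrite lam_gt0 lam_le.
have lam_ge0 := ltW (lam_gt0 i).
have w_ge0 : 0 <= weight i.
  by rewrite !mulr_ge0 ?powR_ge0 ?phi_ge0 // lam_ge0 lam_le.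
have s_rng : 0 <= s <= alpha by rewrite s_ge0 s_le.
have w_le := filter_source_le phi_qual nu alpha s (lam i) nu_gt0 lam_rng s_rng alpha_le1.
rewrite {1}(splitr alpha) powRD ?(gt_eqF (lam_gt0 i)) ?implybT //.
by rewrite -expr2 -exprMn ler_sqr ?nnegrE ?(le_trans w_ge0 w_le).
Qed.

Lemma abs_f_nu_le x C :
  (forall n, (Rad * K) ^+ 2 * \sum_(0 <= i < n) lam i `^ alpha * e i x ^+ 2 <= C ^+ 2) ->
  `|f_nu mu lam e phi nu f x| <= `|C|.
Proof.
move=> le_C; rewrite f_nu_expansion; apply: abs_lim_series_mul_le => n.
apply: le_trans (le_C n); rewrite exprMn -mulrA.
apply: ler_pM.
- by apply: sumr_ge0 => i _; exact: sqr_ge0.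
- by apply: sumr_ge0 => i _; exact: sqr_ge0.
- exact: sum_le_of_nneseries_le _ _ (fun i => sqr_ge0 (a i)) a_l2 n.
- rewrite mulr_sumr; apply: ler_sum => i _.
  by rewrite exprMn mulrA ler_wpM2r ?sqr_ge0 // sqr_weight_le.
Qed.

Lemma Linf_f_nu_le :
  (Linf_norm mu (f_nu mu lam e phi nu f) <= M_emb mu lam e alpha * (Rad * K)%:E)%E.
Proof.
have K_ge0 : 0 <= K by rewrite mulr_ge0 ?powR_ge0 // (filter_const_ge0 phi_ge0 phi_qual nu nu_gt0).
(* [M_emb] may be [+oo] and [+oo * 0 = 0], so a zero constant is treated apart. *)
have := mulr_ge0 Rad_ge0 K_ge0; rewrite le_eqVlt => /predU1P[c0|c_gt0].
  rewrite -c0 mule0; apply/ess_supP; apply: nearW => x; rewrite lee_fin -(normr0 R).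
  by apply: abs_f_nu_le => n; rewrite -c0 expr0n /= mul0r.
apply: le_M_emb_mul => // A A_ge0 SA; apply/ess_supP; apply: filterS SA => x Sx.
rewrite lee_fin -(ger0_norm (mulr_ge0 (ltW c_gt0) A_ge0)); apply: abs_f_nu_le => n.
rewrite [leRHS]exprMn ler_wpM2l ?sqr_ge0 //; apply: (sum_le_of_nneseries_le _ _ _ Sx) => i.
by rewrite mulr_ge0 ?powR_ge0 ?sqr_ge0.
Qed.

End SourceBound.

Theorem lemma7 (R : realType) (d : measure_display) (X : measurableType d)
  (mu : probability X R)
  (k : X -> X -> R) (kappa : R)
  (lam : nat -> R) (e : nat -> X -> R)
  (* spectral data of L_k: positive, non-increasing eigenvalues *)
  (Hlam_pos : forall i, 0 < lam i)
  (Hlam_noninc : forall i j, (i <= j)%N -> lam j <= lam i)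
  (* e_i measurable and orthonormal in L^2(mu) *)
  (He_meas : forall i, measurable_fun setT (e i))
  (He_orth : forall i j,
     (\int[mu]_x (e i x * e j x)%:E = (if i == j then 1 else 0)%:E)%E)
  (* Mercer expansion of k, i.e. {lam_i^{1/2} e_i} is an ONB of H *)
  (Hk : forall x y,
     (fun n => \sum_(0 <= i < n) lam i * e i x * e i y) @ \oo --> k x y)
  (Hkappa : forall x, k x x <= kappa ^+ 2)
  (* (EDR) with beta > 1 *)
  (beta : R) (Hbeta : 1 < beta)
  (HEDR : exists c C : R, 0 < c /\ 0 < C /\ forall i : nat,
     c * (i.+1%:R) `^ (- beta) <= lam i <= C * (i.+1%:R) `^ (- beta))
  (* embedding index alpha0 with 1/beta <= alpha0 < 1 *)
  (alpha0 : R) (Halpha0 : alpha0 = emb_index mu lam e beta)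
  (Halpha0_rng : beta^-1 <= alpha0 < 1)
  (* filter function phi_nu (z) = phi nu z *)
  (phi : R -> R -> R) (E : R) (tau F_tau : R) (Htau : 1 <= tau)
  (Hphi_pos : forall nu z, 0 < nu -> 0 <= z <= kappa ^+ 2 -> 0 <= phi nu z)
  (Hphi1 : forall nu a z, 0 < nu -> 0 <= a <= 1 -> 0 <= z <= kappa ^+ 2 ->
     z `^ a * phi nu z <= E * nu `^ (1 - a))
  (Hphi2 : forall nu a z, 0 < nu -> 0 <= a <= tau -> 0 <= z <= kappa ^+ 2 ->
     `|1 - z * phi nu z| * z `^ a <= F_tau * nu `^ (- a))
  (* source condition *)
  (f_rho : X -> R) (s Rad : R) (HRad : 0 <= Rad) (Hs : 0 < s <= alpha0)
  (Hf : in_Hs_ball mu lam e s Rad f_rho) :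
  forall (nu alpha : R), 0 < nu -> alpha0 < alpha <= 1 ->
  (Linf_norm mu (f_nu mu lam e phi nu f_rho)
     <= M_emb mu lam e alpha * (E * Rad * nu `^ ((alpha - s) / 2))%:E)%E.
Proof.
move=> nu alpha nu_gt0 /andP[alpha0_lt alpha_le1].
have [s_gt0 s_le_alpha0] := andP Hs.
have [mf [a [a_l2 a_cvg]]] := Hf.
have e_norm1 i : (\int[mu]_x (e i x * e i x)%:E = 1)%E by rewrite He_orth eqxx.
have lam_le :=
  mercer_eigenvalue_le (fun i => ltW (Hlam_pos i)) He_meas e_norm1 (fun x => Hk x x) Hkappa.
have coef := Rintegral_mul_e_of_L2_cvg He_meas He_orth f_rho _ mf a_cvg.
rewrite (_ : E * Rad * _ = Rad * (E * nu `^ ((alpha - s) / 2))); last by ring.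
apply: (Linf_f_nu_le Hlam_pos lam_le Hphi_pos Hphi1 nu_gt0 (ltW s_gt0) _ alpha_le1 HRad a_l2 coef).
exact: le_trans s_le_alpha0 (ltW alpha0_lt).
Qed.
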